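(* Let $n\ge 3$ be odd and let $a_0,a_1,\dots,a_{n-1}\in\mathbb{R}$. Let $A'$ be the $n\times n$ matrix with rows and columns indexed by $0,\dots,n-1$ (modulo $n$) with entries $(A')_{j,j+1}=a_{j+1}$, $(A')_{j,j-1}=-a_{j-1}$ (indices mod $n$) and all other entries zero, and let $\mathcal A(x)=\det(xI-A')$. If $a_0<0$, $a_k>0$ for all $k\neq0$, and $a_0+a_2<0$, then $$\mathcal A\big(\sqrt{-a_1(a_0+a_2)}\big)<0 .$$
   Context: For example, for $n$ odd the first row of $A'$ is $(0,a_1,0,\dots,0,-a_{n-1})$ and the last row is $(a_0,0,\dots,0,-a_{n-2},0)$. *)

From mathcomp Require Import all_boot all_order all_algebra.
Set Implicit Arguments. Unset Strict Implicit. Unset Printing Implicit Defensive.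
Import Order.TTheory GRing.Theory Num.Theory.
Local Open Scope ring_scope.

(* The n x n matrix A' with rows/columns indexed by 0..n-1 (mod n):
   (A')_{j,j+1} = a_{j+1}, (A')_{j,j-1} = -a_{j-1}, other entries 0.
   Entry (i,j) is a_j if j = i+1 (mod n), and -a_j if j = i-1 (mod n),
   i.e. if j+1 = i (mod n).  (For n >= 3 these two cases are disjoint.) *)
Definition Aprime (R : pzRingType) (n : nat) (a : nat -> R) : 'M[R]_n :=
  \matrix_(i, j) (if (j : nat) == (i.+1 %% n)%N then a j
                  else if ((j.+1 %% n)%N == i) then - a j else 0).

From mathcomp Require Import all_boot all_order all_algebra.
From mathcomp Require Import zify ring.
Import Order.TTheory GRing.Theory Num.Theory.
Local Open Scope ring_scope.

(* Expand det(xI - A') along its first row and first column. The remaining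
   principal minor is tridiagonal with diagonal x and off-diagonal products
   -a_(k+1) a_k < 0, so its continuants D_k are positive and satisfy
   x D_k <= D_(k+1). For n odd the two corner contributions cancel, and at
   x^2 = -a_1 (a_0 + a_2) the determinant reduces to
   a_1 a_2 (x D_(n-3) - D_(n-2)) + a_0 a_(n-1) D'_(n-2), a sum of a
   nonpositive and a negative term. *)

Section Tridiagonal.
Variable R : comPzRingType.

Definition tridiag m (d u l : nat -> R) : 'M[R]_m :=
  \matrix_(i, j) (if (i : nat) == j then d i else if (j : nat) == i.+1 then u i
     else if (i : nat) == j.+1 then l j else 0).

Lemma tridiag_minor0 m (d u l : nat -> R) :
  row' ord0 (col' ord0 (tridiag m.+1 d u l)) =
  tridiag m (fun k => d k.+1) (fun k => u k.+1) (fun k => l k.+1).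
Proof. by apply/matrixP => i j; rewrite !mxE. Qed.

Lemma tridiag_minor_max m (d u l : nat -> R) :
  row' ord_max (col' ord_max (tridiag m.+1 d u l)) = tridiag m d u l.
Proof. by apply/matrixP => i j; rewrite !mxE !lift_max. Qed.

Lemma det_tridiagSS m (d u l : nat -> R) : \det (tridiag m.+2 d u l) =
  d 0%N * \det (tridiag m.+1 (fun k => d k.+1) (fun k => u k.+1) (fun k => l k.+1))
  - u 0%N * l 0%N *
    \det (tridiag m (fun k => d k.+2) (fun k => u k.+2) (fun k => l k.+2)).
Proof.
rewrite (expand_det_row _ ord0) !big_ord_recl big1 ?addr0; last first.
  by move=> i _; rewrite !mxE mul0r.
rewrite /cofactor tridiag_minor0 !mxE /= expr0 mul1r; congr (_ + _).
rewrite (expand_det_col _ ord0) big_ord_recl big1 ?addr0; last first.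
  by move=> i _; rewrite !mxE mul0r.
rewrite !mxE /cofactor /=.
have -> : row' ord0 (col' ord0 (row' ord0 (col' (lift ord0 ord0) (tridiag m.+2 d u l)))) =
  tridiag m (fun k => d k.+2) (fun k => u k.+2) (fun k => l k.+2).
  by apply/matrixP => i j; rewrite !mxE.
by rewrite /bump /= expr0 expr1 mul1r mulN1r mulrN mulrA.
Qed.

Lemma det_tridiag_minor_max0 m (d u l : nat -> R) :
  \det (row' ord_max (col' ord0 (tridiag m.+2 d u l))) = \prod_(i < m.+1) u i.
Proof.
rewrite det_trig.
  apply: eq_bigr => -[i hi] _; rewrite !mxE lift_max lift0 /= eqxx ifN //.
  by apply/eqP; lia.
apply/is_trig_mxP => -[i hi] [j hj] /= lij; rewrite !mxE lift_max lift0 /=.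
by rewrite !ifN //; apply/eqP; lia.
Qed.

Lemma det_tridiag_minor0_max m (d u l : nat -> R) :
  \det (row' ord0 (col' ord_max (tridiag m.+2 d u l))) = \prod_(i < m.+1) l i.
Proof.
rewrite -det_tr det_trig.
  apply: eq_bigr => -[i hi] _; rewrite !mxE lift_max lift0 /= eqxx !ifN //.
    by apply/eqP; lia.
  by apply/eqP; lia.
apply/is_trig_mxP => -[i hi] [j hj] /= lij; rewrite !mxE lift_max lift0 /=.
by rewrite !ifN //; apply/eqP; lia.
Qed.

End Tridiagonal.

Arguments tridiag {R} m d u l.

Section TridiagonalPositive.
Variable R : numDomainType.

Lemma det_tridiag_gt0 m x (u l : nat -> R) : 0 < x ->
  (forall k, (k.+1 < m)%N -> u k * l k < 0) -> 0 < \det (tridiag m (fun _ => x) u l).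
Proof.
move=> x_gt0; elim/ltn_ind: m u l => [[|[|m]]] IH u l ul_lt0.
- by rewrite det_mx00.
- by rewrite det_mx11 mxE.
rewrite det_tridiagSS -mulNr addr_gt0 ?mulr_gt0 ?oppr_gt0 ?ul_lt0 ?IH //.
  by move=> k k_lt; apply: ul_lt0.
by move=> k k_lt; apply: ul_lt0.
Qed.

Lemma mul_det_tridiag_le m x (u l : nat -> R) : 0 < x ->
  (forall k, (k.+1 < m.+1)%N -> u k * l k < 0) ->
  x * \det (tridiag m (fun _ => x) (fun k => u k.+1) (fun k => l k.+1))
    <= \det (tridiag m.+1 (fun _ => x) u l).
Proof.
case: m => [|m] x_gt0 ul_lt0; first by rewrite det_mx00 det_mx11 mxE mulr1.
rewrite det_tridiagSS -mulNr lerDl mulr_ge0 ?oppr_ge0 ?ltW ?ul_lt0 //.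
by apply: det_tridiag_gt0 => // k k_lt; apply: ul_lt0.
Qed.

End TridiagonalPositive.

Lemma horner_char_poly (R : comNzRingType) n (A : 'M[R]_n) x :
  (char_poly A).[x] = \det (x%:M - A).
Proof.
rewrite /char_poly -horner_evalE -det_map_mx; congr (\det _); apply/matrixP => i j.
by rewrite !mxE /= horner_evalE hornerD hornerN hornerMn hornerX hornerC.
Qed.

Lemma expand_det_border (R : comPzRingType) k (M : 'M[R]_k.+2) : \det M =
  M ord0 ord0 * \det (row' ord0 (col' ord0 M)) -
  \sum_(j < k.+1) \sum_(i < k.+1)
     M ord0 (lift ord0 j) * M (lift ord0 i) ord0 * cofactor (row' ord0 (col' ord0 M)) i j.
Proof.
rewrite (expand_det_row _ ord0) big_ord_recl /cofactor /= expr0 mul1r -sumrN.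
congr (_ + _); apply: eq_bigr => j _.
rewrite (expand_det_col _ ord0) mulrA mulr_sumr -sumrN.
apply: eq_bigr => i _; rewrite /cofactor !mxE.
have -> : lift (lift ord0 j) (ord0 : 'I_k.+1) = ord0 by apply: val_inj.
have -> : row' i (col' ord0 (row' ord0 (col' (lift ord0 j) M))) =
          row' i (col' j (row' ord0 (col' ord0 M))).
  apply/matrixP => a b; rewrite !mxE; congr (M _ _).
  by apply: val_inj => /=; rewrite /bump /=; lia.
rewrite /= /bump /= !addn0 !add0n exprS exprD; ring.
Qed.

Lemma sum2_supp_ends (R : comPzRingType) m (r c : 'I_m.+2 -> R)
    (F : 'I_m.+2 -> 'I_m.+2 -> R) :
  (forall j, j != ord0 -> j != ord_max -> r j = 0) ->
  (forall i, i != ord0 -> i != ord_max -> c i = 0) ->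
  \sum_j \sum_i r j * c i * F i j =
  r ord0 * c ord0 * F ord0 ord0 + r ord0 * c ord_max * F ord_max ord0
  + (r ord_max * c ord0 * F ord0 ord_max + r ord_max * c ord_max * F ord_max ord_max).
Proof.
move=> r_supp c_supp.
have inner j : \sum_i r j * c i * F i j =
                r j * c ord0 * F ord0 j + r j * c ord_max * F ord_max j.
  rewrite (bigD1 ord0) //= (bigD1 ord_max) //= big1 ?addr0 ?addrA //.
  by move=> i /andP[i_neq0 i_neqmax]; rewrite c_supp ?mulr0 ?mul0r.
rewrite (eq_bigr _ (fun j _ => inner j)) (bigD1 ord0) //= (bigD1 ord_max) //=.
rewrite big1 ?addr0 ?addrA //.
by move=> j /andP[j_neq0 j_neqmax]; rewrite r_supp ?mul0r ?addr0.
Qed.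

Lemma modn_SS_wrap m i : (i < m.+2)%N -> (i.+2 %% m.+3 = if i == m.+1 then 0 else i.+2)%N.
Proof. by move=> i_lt; case: eqP => [->|i_neq]; rewrite ?modnn // modn_small //; lia. Qed.

Lemma Aprime_char_minor0 (R : comPzRingType) m (a : nat -> R) x :
  row' ord0 (col' ord0 (x%:M - Aprime m.+3 a)) =
  tridiag m.+2 (fun _ => x) (fun k => - a k.+2) (fun k => a k.+1).
Proof.
apply/matrixP => -[i i_lt] [j j_lt]; rewrite !mxE /= /bump /= !add1n !modn_SS_wrap //.
rewrite -val_eqE /= eqSS.
have -> : (j.+1 == if i == m.+1 then 0 else i.+2)%N = (j == i.+1).
  by case: (eqVneq i m.+1) => [->|_]; apply/eqP/eqP; lia.
have -> : ((if j == m.+1 then 0 else j.+2) == i.+1)%N = (i == j.+1).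
  by case: (eqVneq j m.+1) => [->|_]; apply/eqP/eqP; lia.
case: (eqVneq i j) => [<-|i_neq_j]; first by rewrite !ifN ?subr0 //; apply/eqP; lia.
case: (eqVneq j i.+1) => [->|_]; first by rewrite sub0r.
by case: (eqVneq i j.+1); rewrite sub0r ?opprK ?oppr0.
Qed.

Lemma Aprime_char_row0 (R : comPzRingType) m (a : nat -> R) x (j : 'I_m.+2) :
  (x%:M - Aprime m.+3 a) ord0 (lift ord0 j) =
  if (j : nat) == 0%N then - a 1%N else if (j : nat) == m.+1 then a m.+2 else 0.
Proof.
case: j => j j_lt; rewrite !mxE /= /bump /= add1n modn_SS_wrap //.
rewrite (modn_small (_ : 1 < m.+3)%N) // mulr0n sub0r.
case: (eqVneq j 0%N) => [->|j_neq0] //=; rewrite ifN; last by apply/eqP; lia.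
by case: (eqVneq j m.+1) => [->|_] /=; rewrite ?opprK ?oppr0.
Qed.

Lemma Aprime_char_col0 (R : comPzRingType) m (a : nat -> R) x (i : 'I_m.+2) :
  (x%:M - Aprime m.+3 a) (lift ord0 i) ord0 =
  if (i : nat) == 0%N then a 0%N else if (i : nat) == m.+1 then - a 0%N else 0.
Proof.
case: i => i i_lt; rewrite !mxE /= /bump /= add1n modn_SS_wrap //.
rewrite (modn_small (_ : 1 < m.+3)%N) // mulr0n sub0r.
case: (eqVneq i 0%N) => [->|i_neq0] /=; first by rewrite opprK.
case: (eqVneq i m.+1) => [->|_] //=.
by rewrite !ifN ?oppr0 //; apply/eqP; lia.
Qed.

(* Parity enters only through the sign (-1)^(n-2) of the corner term
   a_(n-1) a_0 a_1 ... a_(n-2), which then cancels a_0 a_1 ... a_(n-1). *)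
Lemma det_char_Aprime_odd (R : comPzRingType) m (a : nat -> R) x : odd m.+3 ->
  \det (x%:M - Aprime m.+3 a) =
    (x ^+ 2 + a 0%N * a 1%N) *
      \det (tridiag m.+1 (fun _ => x) (fun k => - a k.+3) (fun k => a k.+2))
    + x * a 1%N * a 2%N *
      \det (tridiag m (fun _ => x) (fun k => - a k.+4) (fun k => a k.+3))
    + a 0%N * a m.+2 *
      \det (tridiag m.+1 (fun _ => x) (fun k => - a k.+2) (fun k => a k.+1)).
Proof.
move=> n_odd.
rewrite expand_det_border Aprime_char_minor0 sum2_supp_ends; first last.
- by move=> i; rewrite Aprime_char_col0 -!val_eqE /= => /negbTE-> /negbTE->.
- by move=> j; rewrite Aprime_char_row0 -!val_eqE /= => /negbTE-> /negbTE->.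
rewrite !Aprime_char_row0 !Aprime_char_col0 /= !mxE /= mulr1n subr0.
rewrite /cofactor tridiag_minor0 tridiag_minor_max.
rewrite det_tridiag_minor_max0 det_tridiag_minor0_max.
rewrite det_tridiagSS prodrN card_ord eqxx /= !add0n !addn0 !exprD expr0.
have sign : (-1) ^+ m.+1 = -1 :> R by rewrite -signr_odd; move: n_odd => /= /negPn ->.
have corners : a 1%N * \prod_(i < m.+1) a i.+2 = a m.+2 * \prod_(i < m.+1) a i.+1.
  by rewrite -(big_ord_recl _ (fun i => a i.+1)) big_ord_recr mulrC.
apply/eqP; rewrite sign -subr_eq0; apply/eqP.
transitivity (a 0%N * (a m.+2 * \prod_(i < m.+1) a i.+1
                       - a 1%N * \prod_(i < m.+1) a i.+2)).
  by ring.
by rewrite corners subrr mulr0.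
Qed.

Theorem lemma2 (R : rcfType) (n : nat) (a : nat -> R) :
  (3 <= n)%N -> odd n ->
  a 0%N < 0 ->
  (forall k : nat, (0 < k < n)%N -> 0 < a k) ->
  a 0%N + a 2%N < 0 ->
  (char_poly (Aprime n a)).[Num.sqrt (- (a 1%N * (a 0%N + a 2%N)))] < 0.
Proof.
case: n => [|[|[|m]]] // _ n_odd a0_lt0 a_gt0 a02_lt0.
have [a1_gt0 a2_gt0 am_gt0] : [/\ 0 < a 1%N, 0 < a 2%N & 0 < a m.+2].
  by split; apply: a_gt0; lia.
set y := - _; have y_gt0 : 0 < y by rewrite oppr_gt0 pmulr_rlt0.
set x := Num.sqrt y; have x_gt0 : 0 < x by rewrite sqrtr_gt0.
have ul_lt0 k : (0 < k)%N -> (k.+1 < m.+3)%N -> - a k.+1 * a k < 0.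
  by move=> k_gt0 k_lt; rewrite mulNr oppr_lt0 mulr_gt0 // a_gt0 //; lia.
rewrite horner_char_poly det_char_Aprime_odd // sqr_sqrtr ?ltW //.
set D1 := \det (tridiag m.+1 _ _ (fun k => a k.+2)).
set D2 := \det (tridiag m _ _ _).
set D' := \det (tridiag m.+1 _ _ (fun k => a k.+1)).
have D_le : x * D2 <= D1.
  by apply: mul_det_tridiag_le => // k k_lt; apply: ul_lt0; lia.
have D'_gt0 : 0 < D' by apply: det_tridiag_gt0 => // k k_lt; apply: ul_lt0; lia.
rewrite (_ : _ + _ = a 1%N * a 2%N * (x * D2 - D1) + a 0%N * a m.+2 * D'); last first.
  by rewrite /y; ring.
rewrite -[0](addr0 0) ler_ltD //.
  by rewrite pmulr_rle0 ?mulr_gt0 // subr_le0.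
by rewrite pmulr_llt0 // nmulr_rlt0.
Qed.
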